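(* If $\mathcal F=(A,X,f)$ and $\mathcal G=(B,X,g)$ are complete D3-directable fuzzy automata, then their direct product $\mathcal F\times\mathcal G$ is D3-directable.
   Context: A fuzzy automaton is a triple $\mathcal F=(A,X,f)$ with $A$ a finite nonempty set of states, $X$ a finite nonempty alphabet, and $f:A\times X\times A\to[0,1]$, extended to words by $f^*(a,\varepsilon,a)=1$, $f^*(a,\varepsilon,b)=0$ ($b\neq a$), $f^*(a,vx,b)=\max_{c\in A}\min\{f^*(a,v,c),f(c,x,b)\}$. Let $\mathcal F(a,w)=\{b\in A\mid f^*(a,w,b)>0\}$. $\mathcal F$ is complete if $\mathcal F(a,x)\neq\emptyset$ for all $a\in A$, $x\in X$. $\mathcal F$ is D3-directable if there are $w\in X^*$ and $c\in A$ with $c\in\mathcal F(a,w)$ for all $a\in A$. The direct product is $\mathcal F\times\mathcal G=(A\times B,X,h)$ with $h((a,b),x,(a',b'))=\min\{f(a,x,a'),g(b,x,b')\}$. *)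

From HB Require Import structures.
From mathcomp Require Import all_boot all_order all_algebra.
From mathcomp Require Import reals.
Set Implicit Arguments. Unset Strict Implicit. Unset Printing Implicit Defensive.
Import Order.TTheory GRing.Theory Num.Theory.
Local Open Scope ring_scope.

Record fuzzy_automaton (R : realType) (A X : finType) := FuzzyAutomaton {
  fa_trans :> A -> X -> A -> R;
  fa_range : forall a x b, 0 <= fa_trans a x b <= 1
}.

(* Extended transition function f^*, defined by
   f*(a, eps, b) = [a == b], f*(a, v x, b) = max_c min (f*(a,v,c), f(c,x,b)). *)
Fixpoint ext_trans_rev (R : realType) (A X : finType) (f : A -> X -> A -> R)
    (a : A) (rw : seq X) (b : A) : R :=
  match rw with
  | [::] => if a == b then 1 else 0
  | x :: rv => \big[Order.max/0]_(c : A) Order.min (ext_trans_rev f a rv c) (f c x b)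
  end.

(* f^*(a, w, b), words as seq X read left to right *)
Definition ext_trans (R : realType) (A X : finType) (f : A -> X -> A -> R)
    (a : A) (w : seq X) (b : A) : R := ext_trans_rev f a (rev w) b.

Definition reach (R : realType) (A X : finType) (f : A -> X -> A -> R)
    (a : A) (w : seq X) : {set A} := [set b | 0 < ext_trans f a w b].

Definition complete (R : realType) (A X : finType) (f : A -> X -> A -> R) : Prop :=
  forall (a : A) (x : X), reach f a [:: x] != set0.

Definition D3_directable (R : realType) (A X : finType) (f : A -> X -> A -> R) : Prop :=
  exists (w : seq X) (c : A), forall a : A, c \in reach f a w.

Definition prod_trans (R : realType) (A B X : finType)
    (f : A -> X -> A -> R) (g : B -> X -> B -> R) : (A * B)%type -> X -> (A * B)%type -> R :=
  fun p x q => Order.min (f p.1 x q.1) (g p.2 x q.2).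

Lemma prod_trans_range (R : realType) (A B X : finType)
    (F : fuzzy_automaton R A X) (G : fuzzy_automaton R B X) p x q :
  0 <= prod_trans F G p x q <= 1.
Proof.
rewrite /prod_trans; case/andP: (fa_range F p.1 x q.1) => h1 h2.
case/andP: (fa_range G p.2 x q.2) => h3 h4.
by rewrite le_min h1 h3 ge_min h2.
Qed.

Definition prod_automaton (R : realType) (A B X : finType)
    (F : fuzzy_automaton R A X) (G : fuzzy_automaton R B X) : fuzzy_automaton R (A * B)%type X :=
  FuzzyAutomaton (prod_trans_range F G).

From HB Require Import structures.
From mathcomp Require Import all_boot all_order all_algebra.
From mathcomp Require Import reals.
Set Implicit Arguments. Unset Strict Implicit. Unset Printing Implicit Defensive.
Import Order.TTheory GRing.Theory Num.Theory.
Local Open Scope ring_scope.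

(* Only the supports F(a, w) matter.  Let u direct F to c and v direct G to d.
   Reading u from (a, b), the first component reaches c while completeness of G
   keeps the second one alive at some b'.  Reading v from (c, b'), the second
   component reaches d while completeness of F keeps the first one alive; since
   F(c, v) is a fixed nonempty set, one c' in it serves every start (a, b).
   Hence uv directs F x G to (c', d). *)

Lemma bigmax_gtP d (T : orderType d) (x0 : T) (I : finType) (F : I -> T) :
  reflect (exists i, (x0 < F i)%O) (x0 < \big[Order.max/x0]_i F i)%O.
Proof.
apply: (iffP idP) => [|[i x0_lt_Fi]]; last exact: lt_le_trans x0_lt_Fi (le_bigmax _ _ _).
case: (pickP (fun i => x0 < F i)%O) => [i x0_lt_Fi _|F_le]; first by exists i.
suff: (\big[Order.max/x0]_i F i <= x0)%O by rewrite leNgt => /negP.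
by apply: bigmax_le => // i _; rewrite leNgt F_le.
Qed.

Section Reach.
Variables (R : realType) (A X : finType) (f : A -> X -> A -> R).

Lemma reach_nil a : reach f a [::] = [set a].
Proof.
by apply/setP => b; rewrite !inE /ext_trans /= eq_sym; case: eqP; rewrite ?ltr01 ?ltxx.
Qed.

Lemma reach_rcons a w x b :
  (b \in reach f a (rcons w x)) = [exists c, (c \in reach f a w) && (0 < f c x b)].
Proof.
rewrite inE /ext_trans rev_rcons /=.
by apply/bigmax_gtP/existsP => -[c c_ok]; exists c; rewrite inE lt_min in c_ok *.
Qed.

Lemma reach_cat a u c v b :
  c \in reach f a u -> b \in reach f c v -> b \in reach f a (u ++ v).
Proof.
move=> c_in; elim/last_ind: v b => [|v x IHv] b.
  by rewrite reach_nil cats0 inE => /eqP ->.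
rewrite -rcons_cat !reach_rcons => /existsP [e /andP [e_in f_ebx]].
by apply/existsP; exists e; rewrite IHv.
Qed.

Lemma reach_neq0 : complete f -> forall a w, reach f a w != set0.
Proof.
move=> f_complete a w; elim: w a => [|x w IHw] a.
  by rewrite reach_nil; apply/set0Pn; exists a; rewrite inE.
have /set0Pn [c c_in] := f_complete a x.
have /set0Pn [b b_in] := IHw c.
by apply/set0Pn; exists b; exact: (reach_cat c_in b_in).
Qed.

End Reach.

Lemma reach_prod (R : realType) (A B X : finType)
  (f : A -> X -> A -> R) (g : B -> X -> B -> R) a b w a' b' :
  a' \in reach f a w -> b' \in reach g b w ->
  (a', b') \in reach (prod_trans f g) (a, b) w.
Proof.
elim/last_ind: w a' b' => [|w x IHw] a' b'.
  by rewrite !reach_nil !inE => /eqP -> /eqP ->.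
rewrite !reach_rcons => /existsP [c /andP [c_in f_cxa]] /existsP [e /andP [e_in g_exb]].
by apply/existsP; exists (c, e); rewrite IHw //= /prod_trans lt_min f_cxa g_exb.
Qed.

Lemma D3_directable_prod (R : realType) (A B X : finType)
  (f : A -> X -> A -> R) (g : B -> X -> B -> R) :
  complete f -> complete g -> D3_directable f -> D3_directable g ->
  D3_directable (prod_trans f g).
Proof.
move=> f_complete g_complete [u [c u_directs]] [v [d v_directs]].
have /set0Pn [c' c'_in] := reach_neq0 f_complete c v.
exists (u ++ v), (c', d) => -[a b].
have /set0Pn [b' b'_in] := reach_neq0 g_complete b u.
by apply: (reach_cat (c := (c, b'))); apply: reach_prod.
Qed.

Theorem proposition6p10 (R : realType) (A B X : finType)
  (a0 : A) (b0 : B) (x0 : X)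
  (F : fuzzy_automaton R A X) (G : fuzzy_automaton R B X) :
  complete F -> complete G -> D3_directable F -> D3_directable G ->
  D3_directable (prod_automaton F G).
Proof. exact: D3_directable_prod. Qed.
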